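(* The LCM matrix $[S]$ is invertible for every finite GCD closed $\wedge$-tree set $S$ of positive integers.
   Context: $S$ is GCD closed if $\gcd(x,y)\in S$ for all $x,y\in S$. A set $S$ is a $\wedge$-tree set if the Hasse diagram of its meet closure (here, since $S$ is GCD closed, of $(S,\mid)$ itself) is a tree. The LCM matrix $[S]$ of $S=\{x_1,\dots,x_n\}$ has $(i,j)$ entry $\mathrm{lcm}(x_i,x_j)$. *)

From HB Require Import structures.
From mathcomp Require Import all_boot all_order all_algebra.
Set Implicit Arguments. Unset Strict Implicit. Unset Printing Implicit Defensive.
Import GRing.Theory Num.Theory.

(* A finite set S of positive integers is represented by a duplicate-free
   sequence s; its elements are s`_0, ..., s`_(size s - 1). *)

Definition gcd_closed (s : seq nat) : Prop :=
  forall x y, x \in s -> y \in s -> gcdn x y \in s.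

Definition covers (s : seq nat) (x y : nat) : bool :=
  [&& x \in s, y \in s, y %| x, y != x &
      ~~ has (fun z => [&& y %| z, z %| x, z != y & z != x]) s].

Definition hasse_adj (s : seq nat) : rel nat :=
  fun x y => covers s x y || covers s y x.

Definition hasse_connected (s : seq nat) : Prop :=
  forall x y, x \in s -> y \in s ->
    exists p : seq nat, path (hasse_adj s) x p /\ last x p = y.

Definition hasse_acyclic (s : seq nat) : Prop :=
  forall c : seq nat, uniq c -> 2 < size c -> ~~ cycle (hasse_adj s) c.

Definition hasse_tree (s : seq nat) : Prop :=
  hasse_connected s /\ hasse_acyclic s.

(* S is a meet-tree set; for GCD closed S the meet closure is S itself. *)
Definition wedge_tree (s : seq nat) : Prop := hasse_tree s.

Definition lcm_mx (s : seq nat) : 'M[rat]_(size s) :=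
  \matrix_(i < size s, j < size s) ((lcmn (nth 0 s i) (nth 0 s j))%:R : rat).

From HB Require Import structures.
From mathcomp Require Import all_boot all_order all_algebra.
From mathcomp Require Import ring.
Set Implicit Arguments. Unset Strict Implicit. Unset Printing Implicit Defensive.
Import GRing.Theory Num.Theory.

(* If the Hasse diagram of a GCD closed set S is acyclic, no x in S has two
   lower covers a and b: the covering chains from gcd(a, b) up to a and to b
   would close a cycle through x.  Hence the proper divisors of each x in S
   form a chain.  Let x be the largest element of S and p its largest proper
   divisor in S.  For every other z in S, gcd(z, x) is a proper divisor of x,
   so it divides p and gcd(z, x) = gcd(z, p); thus lcm(z, x) = (x/p) lcm(z, p).
   Subtracting x/p times the column of p from the column of x in [S] leaves a
   single nonzero entry, in row x, so every vector in the left kernel of [S]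
   vanishes at x, and we conclude by induction after removing x from S. *)

Definition cover_step (s : seq nat) : rel nat := fun u v => covers s v u.

Definition divisor_chains (s : seq nat) : Prop :=
  forall x a b, x \in s -> a \in s -> b \in s ->
    a %| x -> b %| x -> a != x -> b != x -> (a %| b) || (b %| a).

Lemma divisor_chains_sub (s t : seq nat) :
  {subset t <= s} -> divisor_chains s -> divisor_chains t.
Proof. by move=> ts chs x a b /ts xs /ts as_ /ts bs; apply: chs. Qed.

Lemma hasse_adj_sym (s : seq nat) : symmetric (hasse_adj s).
Proof. by move=> u v; rewrite /hasse_adj orbC. Qed.

Lemma hasse_adj_cover_step (s : seq nat) u v : cover_step s u v -> hasse_adj s u v.
Proof. by rewrite /hasse_adj /cover_step => ->; rewrite orbT. Qed.

Section HasseDiagram.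

Variable s : seq nat.
Hypothesis s_pos : all (fun x => 0 < x) s.

Let pos_of_mem x : x \in s -> 0 < x.
Proof. exact: (allP s_pos). Qed.

Lemma covers_lt x z : covers s x z -> z < x.
Proof.
case/and5P=> xs _ zx nzx _; rewrite ltn_neqAle nzx.
exact: dvdn_leq (pos_of_mem xs) zx.
Qed.

Lemma cover_step_lt u v : cover_step s u v -> u < v.
Proof. exact: covers_lt. Qed.

(* The cover is the largest multiple of [a] in [s] properly dividing [x]. *)
Lemma exists_cover_above a x : a \in s -> x \in s -> a %| x -> a != x ->
  exists2 z, covers s x z & a %| z.
Proof.
move=> as_ xs ax nax.
pose between z := [&& z \in s, a %| z, z %| x & z != x].
have ex_between : exists z, between z by exists a; rewrite /between as_ dvdnn ax nax.
have le_x z : between z -> z <= x.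
  by case/and4P=> _ _ zx _; apply: dvdn_leq (pos_of_mem xs) zx.
case: (ex_maxnP ex_between le_x) => m /and4P[ms am mx nmx] m_max.
exists m => //; rewrite /covers xs ms mx nmx /=.
apply/hasPn => w ws; apply/negP => /and4P[mw wx nwm nwx].
have w_le_m : w <= m by apply: m_max; rewrite /between ws (dvdn_trans am mw) wx nwx.
by move: nwm; rewrite eqn_leq w_le_m (dvdn_leq (pos_of_mem ws) mw).
Qed.

Lemma exists_cover_chain d e : d \in s -> e \in s -> d %| e ->
  exists c, [/\ path (cover_step s) d c, last d c = e &
                all (fun z => (d %| z) && (z %| e)) c].
Proof.
move=> ds; elim/ltn_ind: e => e IH es de.
have [<-|nde] := eqVneq d e; first by exists [::].
have [z cez dz] := exists_cover_above ds es de nde.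
have [zs ze] : z \in s /\ z %| e by case/and5P: cez.
have [c [pc lc dvd_c]] := IH z (covers_lt cez) zs dz.
exists (rcons c e); split; first by rewrite rcons_path pc lc.
  by rewrite last_rcons.
rewrite all_rcons de dvdnn /=; apply/allP => w /(allP dvd_c) /andP[-> wz].
exact: dvdn_trans wz ze.
Qed.

Lemma cover_path_uniq d c : path (cover_step s) d c -> uniq (d :: c).
Proof.
move=> pc; apply: (sorted_uniq ltn_trans ltnn).
by apply: sub_path pc => u v /cover_step_lt.
Qed.

Lemma cover_path_gt d c : path (cover_step s) d c -> all (fun w => d < w) c.
Proof.
move=> pc; apply: (order_path_min ltn_trans).
by apply: sub_path pc => u v /cover_step_lt.
Qed.

(* Going down from [x] to [b] and along the chain [cb] to [g], then back up
   along [ca] to [a], closes a cycle in the Hasse diagram. *)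
Lemma hasse_cycle_of_chains x a b g ca cb :
  covers s x a -> covers s x b ->
  path (cover_step s) g ca -> last g ca = a ->
  path (cover_step s) g cb -> last g cb = b ->
  cycle (hasse_adj s) (x :: rev (g :: cb) ++ ca).
Proof.
move=> cxa cxb pa la pb lb.
rewrite /cycle rcons_cat cat_path; apply/andP; split.
  have := rev_path (hasse_adj s) g (rcons cb x).
  rewrite belast_rcons last_rcons => ->.
  rewrite (@eq_path _ _ (hasse_adj s)); last by move=> u v; apply: hasse_adj_sym.
  rewrite rcons_path lb hasse_adj_cover_step // andbT.
  by apply: sub_path pb => u v /hasse_adj_cover_step.
rewrite /= rev_cons last_rcons rcons_path la hasse_adj_cover_step // andbT.
by apply: sub_path pa => u v /hasse_adj_cover_step.
Qed.

Hypothesis s_gcd : gcd_closed s.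

Lemma lower_cover_unique x a b : hasse_acyclic s ->
  covers s x a -> covers s x b -> a = b.
Proof.
move=> acyclic cxa cxb; apply/eqP/negPn/negP => nab.
have [xs as_ ax nax _] := and5P cxa.
have [_ bs bx nbx no_mid_b] := and5P cxb.
pose g := gcdn a b.
have [ca [pa la dvd_ca]] := exists_cover_chain (s_gcd as_ bs) as_ (dvdn_gcdl a b).
have [cb [pb lb dvd_cb]] := exists_cover_chain (s_gcd as_ bs) bs (dvdn_gcdr a b).
have dvd_a w : w \in g :: ca -> w %| a.
  by rewrite inE => /predU1P[->|/(allP dvd_ca)/andP[]//]; apply: dvdn_gcdl.
have dvd_b w : w \in g :: cb -> w %| b.
  by rewrite inE => /predU1P[->|/(allP dvd_cb)/andP[]//]; apply: dvdn_gcdr.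
have neq_x e w : covers s x e -> w %| e -> w != x.
  move=> cxe we; rewrite neq_ltn (leq_trans _ (covers_lt cxe)) //.
  by rewrite ltnS dvdn_leq // pos_of_mem //; case/and5P: cxe.
have ngb : g != b.
  apply: contraTneq no_mid_b => gb; apply/negPn/hasP; exists a => //.
  by rewrite -gb dvdn_gcdl ax nax gb andbT.
have cycle_uniq : uniq (x :: rev (g :: cb) ++ ca).
  have uniq_ca : uniq ca by case/andP: (cover_path_uniq pa).
  rewrite cons_uniq cat_uniq rev_uniq cover_path_uniq // uniq_ca andbT.
  rewrite mem_cat mem_rev negb_or -andbA; apply/and3P; split.
  - by apply/negP => xcb; move: (neq_x _ _ cxb (dvd_b x xcb)); rewrite eqxx.
  - apply/negP => xca; have xa := dvd_a x (@mem_behead _ (g :: ca) x xca).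
    by move: (neq_x _ _ cxa xa); rewrite eqxx.
  - apply/hasPn => w wca; rewrite mem_rev; apply/negP => wgb.
    have wg : w %| g by rewrite dvdn_gcd dvd_a ?dvd_b // inE wca orbT.
    have := allP (cover_path_gt pa) w wca.
    by rewrite ltnNge dvdn_leq // pos_of_mem // s_gcd.
have size_gt2 : 2 < size (x :: rev (g :: cb) ++ ca).
  case: cb lb {pb dvd_cb dvd_b cycle_uniq} => [|w cb] lb.
    by move: ngb; rewrite -lb eqxx.
  by rewrite /= size_cat size_rev.
move: (acyclic _ cycle_uniq size_gt2) => /negP; apply.
exact: (hasse_cycle_of_chains cxa cxb pa la pb lb).
Qed.

Lemma acyclic_divisor_chains : hasse_acyclic s -> divisor_chains s.
Proof.
move=> acyclic x; elim/ltn_ind: x => x IH a b xs as_ bs ax bx nax nbx.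
have [a' cxa' aa'] := exists_cover_above as_ xs ax nax.
have [b' cxb' bb'] := exists_cover_above bs xs bx nbx.
have eab := lower_cover_unique acyclic cxa' cxb'; subst b'.
have a's : a' \in s by case/and5P: cxa'.
have [->|naa'] := eqVneq a a'; first by rewrite bb' orbT.
have [->|nba'] := eqVneq b a'; first by rewrite aa'.
exact: IH a' (covers_lt cxa') a b a's as_ bs aa' bb' naa' nba'.
Qed.

End HasseDiagram.

Lemma lcmn_mul_gcd_eq z x p : 0 < z -> 0 < p -> gcdn z x = gcdn z p ->
  lcmn z x * p = lcmn z p * x.
Proof.
move=> z_gt0 p_gt0 gcdE; have g_gt0 : 0 < gcdn z p by rewrite gcdn_gt0 z_gt0.
apply/eqP; rewrite -(eqn_pmul2r g_gt0) mulnAC -{1}gcdE muln_lcm_gcd; apply/eqP.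
by rewrite [RHS]mulnAC muln_lcm_gcd mulnAC.
Qed.

Definition in_lcm_kernel (s : seq nat) (c : nat -> rat) : Prop :=
  forall y, y \in s -> (\sum_(z <- s) c z * (lcmn z y)%:R = 0)%R.

Section MaximalElement.

Variables (s : seq nat) (c : nat -> rat) (x : nat).
Hypothesis s_uniq : uniq s.
Hypothesis s_pos : all (fun x => 0 < x) s.
Hypothesis s_gcd : gcd_closed s.
Hypothesis s_chains : divisor_chains s.
Hypothesis x_in_s : x \in s.
Hypothesis x_max : forall z, z \in s -> z <= x.
Hypothesis c_ker : in_lcm_kernel s c.

Let pos_of_mem z : z \in s -> 0 < z.
Proof. exact: (allP s_pos). Qed.

Lemma max_ndvd z : z \in s -> z != x -> ~~ (x %| z).
Proof.
move=> zs nzx; apply: contra nzx => xz.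
by rewrite eqn_leq x_max // dvdn_leq // pos_of_mem.
Qed.

Lemma gcdn_max_neq z : z \in s -> z != x -> gcdn z x != x.
Proof.
move=> zs nzx; apply: contraNneq (max_ndvd zs nzx) => <-; exact: dvdn_gcdl.
Qed.

Lemma gcd_closed_rem_max : gcd_closed (rem x s).
Proof.
move=> a b; rewrite !(mem_rem_uniq x s_uniq) => /andP[nax as_] /andP[_ bs].
rewrite inE s_gcd // andbT; apply: contraNneq (max_ndvd as_ nax) => <-.
exact: dvdn_gcdl.
Qed.

Lemma in_lcm_kernel_rem_max : c x = 0%R -> in_lcm_kernel (rem x s) c.
Proof.
move=> cx0 y; rewrite (mem_rem_uniq x s_uniq) => /andP[_ ys].
have := c_ker ys; rewrite (bigD1_seq x x_in_s s_uniq) /= cx0 mul0r add0r.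
by rewrite rem_filter // big_filter.
Qed.

Section LargestProperDivisor.

Variable p : nat.
Hypotheses (p_in_s : p \in s) (p_dvd_x : p %| x) (p_neq_x : p != x).
Hypothesis p_max : forall d, d \in s -> d %| x -> d != x -> d <= p.

Lemma gcdn_max_pred z : z \in s -> z != x -> gcdn z x = gcdn z p.
Proof.
move=> zs nzx; have gs := s_gcd zs x_in_s.
have gp : gcdn z x %| p.
  have := s_chains x_in_s gs p_in_s (dvdn_gcdr z x) p_dvd_x
    (gcdn_max_neq zs nzx) p_neq_x.
  case/orP=> // pg; rewrite (@anti_leq (gcdn z x) p) // p_max ?dvdn_gcdr //.
    by rewrite dvdn_leq // pos_of_mem.
  exact: gcdn_max_neq.
apply/eqP; rewrite eqn_dvd !dvdn_gcd !dvdn_gcdl gp /=.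
exact: dvdn_trans (dvdn_gcdr z p) p_dvd_x.
Qed.

Lemma in_lcm_kernel_max_pred : c x = 0%R.
Proof.
have [x_gt0 p_gt0] := (pos_of_mem x_in_s, pos_of_mem p_in_s).
have p_neq0 : (p%:R != 0 :> rat)%R by rewrite pnatr_eq0 -lt0n.
have : (\sum_(z <- s) c z * ((lcmn z x)%:R - x%:R / p%:R * (lcmn z p)%:R) = 0)%R.
  under eq_bigr do rewrite mulrBr mulrCA.
  by rewrite sumrB -mulr_sumr c_ker // c_ker // mulr0 subrr.
rewrite (bigD1_seq x x_in_s s_uniq) /= big_seq_cond big1 ?addr0; last first.
  move=> z /andP[zs nzx]; apply/eqP; rewrite mulf_eq0 subr_eq0; apply/orP; right.
  rewrite -(inj_eq (mulIf p_neq0)) mulrAC divfK // -!natrM eqr_nat.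
  by rewrite lcmn_mul_gcd_eq ?gcdn_max_pred ?pos_of_mem // mulnC.
have diag_neq0 : (x%:R - x%:R / p%:R * x%:R != 0 :> rat)%R.
  have -> : (x%:R - x%:R / p%:R * x%:R = x%:R * (p%:R - x%:R) / p%:R :> rat)%R.
    by field.
  by rewrite !mulf_neq0 ?invr_neq0 // ?pnatr_eq0 -?lt0n // subr_eq0 eqr_nat.
rewrite (lcmn_idPl (dvdnn x)) (lcmn_idPl p_dvd_x) => /eqP.
by rewrite mulf_eq0 (negbTE diag_neq0) orbF => /eqP.
Qed.

End LargestProperDivisor.

Lemma in_lcm_kernel_max_eq0 : c x = 0%R.
Proof.
have [has_div | no_div] := boolP (has (fun d => (d %| x) && (d != x)) s).
  pose proper d := [&& d \in s, d %| x & d != x].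
  have ex_proper : exists d, proper d.
    by have /hasP[d ds /andP[dx ndx]] := has_div; exists d; apply/and3P.
  have le_x d : proper d -> d <= x.
    by case/and3P=> _ dx _; apply: dvdn_leq (pos_of_mem x_in_s) dx.
  have [p /and3P[ps px npx] p_max] := ex_maxnP ex_proper le_x.
  apply: (in_lcm_kernel_max_pred ps px npx) => d ds dx ndx.
  by apply: p_max; apply/and3P.
have := c_ker x_in_s; rewrite (bigD1_seq x x_in_s s_uniq) /= big_seq_cond big1.
  rewrite addr0 (lcmn_idPl (dvdnn x)) => /eqP.
  by rewrite mulf_eq0 pnatr_eq0 eqn0Ngt pos_of_mem // orbF => /eqP.
move=> z /andP[zs nzx]; have := hasPn no_div _ (s_gcd zs x_in_s).
by rewrite dvdn_gcdr gcdn_max_neq.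
Qed.

End MaximalElement.

Lemma in_lcm_kernel_eq0 (s : seq nat) (c : nat -> rat) :
  uniq s -> all (fun x => 0 < x) s -> gcd_closed s -> divisor_chains s ->
  in_lcm_kernel s c -> {in s, forall z, c z = 0%R}.
Proof.
have [n] := ubnP (size s); elim: n s => // n IH s size_lt.
move=> s_uniq s_pos s_gcd s_chains c_ker z zs.
have le_max w : w \in s -> w <= \max_(v <- s) v.
  by move=> ws; apply: (@leq_bigmax_seq _ s xpredT id).
have [x x_in_s x_max] := ex_maxnP (ex_intro (fun w => w \in s) z zs) le_max.
have cx0 := in_lcm_kernel_max_eq0 s_uniq s_pos s_gcd s_chains x_in_s x_max c_ker.
have [-> //|nzx] := eqVneq z x.
have sub_s : {subset rem x s <= s} by move=> w; apply: mem_rem.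
apply: (IH (rem x s)).
- have s_gt0 : 0 < size s by rewrite -has_predT; apply/hasP; exists z.
  by rewrite size_rem // -ltnS prednK.
- exact: rem_uniq.
- by apply/allP => w /sub_s; apply: (allP s_pos).
- exact: gcd_closed_rem_max.
- exact: divisor_chains_sub s_chains.
- exact: in_lcm_kernel_rem_max.
- by rewrite (mem_rem_uniq x s_uniq) inE nzx.
Qed.

Lemma lcm_mx_unitmx (s : seq nat) : uniq s ->
  (forall c, in_lcm_kernel s c -> {in s, forall z, c z = 0%R}) ->
  lcm_mx s \in unitmx.
Proof.
move=> s_uniq ker_trivial; rewrite unitmxE unitfE.
apply/negP => /det0P[v v_neq0 vA].
pose c z := if insub (index z s) is Some i then v ord0 i else 0%R.
have cE (i : 'I_(size s)) : c (nth 0 s i) = v ord0 i by rewrite /c index_uniq // valK.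
have c_ker : in_lcm_kernel s c.
  move=> y ys; have yi : index y s < size s by rewrite index_mem.
  have := congr1 (fun M : 'rV[rat]_(size s) => M ord0 (Ordinal yi)) vA.
  rewrite !mxE => vAy; rewrite -[RHS]vAy (big_nth 0) big_mkord.
  apply: eq_bigr => i _.
  by rewrite cE mxE /= nth_index.
move/eqP: v_neq0; apply; apply/rowP => i; rewrite mxE -cE.
exact: ker_trivial (mem_nth 0 (ltn_ord i)).
Qed.

Theorem corollary4p6 (s : seq nat) :
  uniq s -> all (fun x => 0 < x) s -> gcd_closed s -> wedge_tree s ->
  lcm_mx s \in unitmx.
Proof.
move=> s_uniq s_pos s_gcd [_ acyclic]; apply: (lcm_mx_unitmx s_uniq) => c.
exact: in_lcm_kernel_eq0 s_uniq s_pos s_gcd (acyclic_divisor_chains s_pos s_gcd acyclic).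
Qed.
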